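(* Let $W$ be a complex reflection group and $g\in W$. Suppose that the factors of some reduced reflection factorization $g=t_1\cdots t_k$ form a good generating set for some parabolic subgroup $W_X$ (that is, $\langle t_1,\dots,t_k\rangle=W_X$ and $k=\operatorname{rank}(W_X)$). Then $X=V^g$, $W_X$ is the parabolic closure $W_g$ of $g$, and $\ell_R(g)=\operatorname{codim}(V^g)$.
   Context: A complex reflection group is a finite subgroup of $\mathrm{GL}(V)$, $V$ a finite-dimensional Hermitian space, generated by unitary reflections (unitary maps whose fixed space is a hyperplane). The rank of a reflection group $G$ is $\operatorname{codim}(V^G)$ where $V^G$ is its fixed space. $\ell_R(g)$ is the minimum number of reflections whose product is $g$; a factorization achieving it is reduced. A parabolic subgroup is the pointwise stabilizer of a subset of $V$; $W_X$ denotes the pointwise stabilizer of the flat $X$ (intersection of reflection hyperplanes), and $\operatorname{rank}(W_X)=\operatorname{codim}(X)$. The parabolic closure $W_g$ is the intersection of all parabolic subgroups containing $g$; it equals $W_{V^g}$. *)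

(* A complex reflection group is modelled as a finite group
   G (in a finGroupType gT) together with a FAITHFUL matrix representation
   rG : G -> GL_n(algC) acting on row vectors V = 'rV[algC]_n, equipped with
   the standard Hermitian form.  Subspaces of V are row spaces of matrices. *)
From HB Require Import structures.
From mathcomp Require Import all_boot all_order all_algebra all_fingroup all_field all_character.
Set Implicit Arguments. Unset Strict Implicit. Unset Printing Implicit Defensive.
Import GRing.Theory Num.Theory.
Local Open Scope ring_scope.

Definition unitary n (A : 'M[algC]_n) : bool :=
  A *m (map_mx (fun z : algC => z^*) A)^T == 1%:M.

Definition fixmx n (A : 'M[algC]_n) : 'M[algC]_n := kermx (A - 1%:M).

Definition is_reflection n (A : 'M[algC]_n) : bool :=
  unitary A && ((\rank (fixmx A)).+1 == n).

Section Defs.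
Variables (gT : finGroupType) (G : {group gT}) (n : nat)
          (rG : mx_representation algC G n).

Definition reflections : {set gT} := [set t in G | is_reflection (rG t)].

Definition refl_group : Prop :=
  mx_faithful rG /\ G :=: <<reflections>>%g.

Definition fixG (H : {set gT}) : 'M[algC]_n := (\bigcap_(w in H) fixmx (rG w))%MS.

Definition grank (H : {set gT}) : nat := (n - \rank (fixG H))%N.

Definition flat (X : 'M[algC]_n) : Prop :=
  exists T : {set gT}, T \subset reflections /\
    (X == \bigcap_(t in T) fixmx (rG t))%MS.

Definition stab (X : 'M[algC]_n) : {set gT} :=
  [set w in G | (X <= fixmx (rG w))%MS].

Definition parabolic (P : {set gT}) : Prop :=
  exists A : 'rV[algC]_n -> Prop, forall w : gT,
    w \in P <-> (w \in G /\ forall v, A v -> v *m rG w = v).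

Definition parabolic_closure (g : gT) (H : {set gT}) : Prop :=
  forall w : gT, w \in H <-> (forall P, parabolic P -> g \in P -> w \in P).

Definition refl_factorization (g : gT) (ts : seq gT) : bool :=
  all (fun t => t \in reflections) ts && (g == \prod_(t <- ts) t)%g.

Definition is_refl_length (g : gT) (k : nat) : Prop :=
  (exists ts, refl_factorization g ts /\ size ts = k) /\
  (forall ts, refl_factorization g ts -> (k <= size ts)%N).

Definition reduced_factorization (g : gT) (ts : seq gT) : Prop :=
  refl_factorization g ts /\ is_refl_length g (size ts).

End Defs.

From HB Require Import structures.
From mathcomp Require Import all_boot all_order all_algebra all_fingroup all_field all_character.
From mathcomp Require Import zify.

Import GRing.Theory Num.Theory.
Set Implicit Arguments. Unset Strict Implicit. Unset Printing Implicit Defensive.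
Local Open Scope ring_scope.
Local Open Scope sesquilinear_scope.

(* Let K be the common fixed space of t_1, ..., t_k.  As the t_i generate W_X and X is a
   flat, K = X, so codim K = k.  By unitarity the orthogonal complement of K is spanned by
   the moved spaces Im(t_i - 1), which are lines; hence these k lines are independent.
   Independence forces a vector fixed by g = t_1 ... t_k to be fixed by every t_i, so
   V^g <= K = X <= V^g.  Then W_X = W_{V^g} is the parabolic closure of g, and
   codim V^g = k is the reflection length since the factorization is reduced. *)

Lemma sub_bigcapmx_seqP (F : fieldType) (I : eqType) (r : seq I) m n
    (A : 'M[F]_(m, n)) (B_ : I -> 'M[F]_n) :
  reflect (forall i, i \in r -> (A <= B_ i)%MS) (A <= \bigcap_(i <- r) B_ i)%MS.
Proof.
apply: (iffP idP) => [sAB i i_r | sAB].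
  by apply: submx_trans sAB _; rewrite (big_rem i) //= capmxSl.
rewrite big_seq; apply: (big_ind (fun C => A <= C)%MS) => [|C1 C2|i i_r].
- exact: submx1.
- by move=> ? ?; rewrite sub_capmx; apply/andP.
exact: sAB.
Qed.

Local Notation movedsp Ms := (\sum_(M <- Ms) (M - 1%:M))%MS.
Local Notation fixsp Ms := (\bigcap_(M <- Ms) fixmx M)%MS.

Section FixedAndMovedSpaces.
Variable n : nat.
Implicit Types (A M U : 'M[algC]_n) (Ms : seq 'M[algC]_n).

(* ['M_n] is a ring only for positive [n], hence a fold instead of [\prod]. *)
Definition mxprod Ms : 'M[algC]_n := foldr (@mulmx _ n n n) 1%:M Ms.

Lemma sub_fixmx m (v : 'M_(m, n)) A : (v <= fixmx A)%MS = (v *m A == v).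
Proof. by rewrite sub_kermx mulmxBr mulmx1 subr_eq0. Qed.

Lemma reflection_rank_moved A : is_reflection A -> \rank (A - 1%:M) = 1%N.
Proof.
case/andP=> _ /eqP; rewrite mxrank_ker.
by have := rank_leq_col (A - 1%:M); lia.
Qed.

Lemma mxprod_sub_moved m (u : 'M_(m, n)) Ms : (u *m mxprod Ms - u <= movedsp Ms)%MS.
Proof.
elim: Ms u => [|M Ms IH] u /=; first by rewrite big_nil mulmx1 subrr sub0mx.
have -> : u *m (M *m mxprod Ms) - u
          = (u *m M *m mxprod Ms - u *m M) + u *m (M - 1%:M).
  by rewrite mulmxBr mulmx1 mulmxA addrA subrK.
rewrite big_cons addrC; apply: addmx_sub_adds; first exact: submxMl.
exact: IH.
Qed.

Lemma mxrank_moved_le Ms :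
  (\rank (movedsp Ms) <= \sum_(M <- Ms) \rank (M - 1%:M)%R)%N.
Proof.
elim: Ms => [|M Ms IH]; first by rewrite !big_nil mxrank0.
rewrite !big_cons; apply: leq_trans (mxrank_adds_leqif _ _) _.
by rewrite leq_add2l.
Qed.

Lemma mxrank_adds_direct m1 m2 (A : 'M[algC]_(m1, n)) (B : 'M[algC]_(m2, n)) s :
  \rank (A + B)%MS = (\rank A + s)%N -> (\rank B <= s)%N ->
  \rank B = s /\ (A :&: B)%MS = 0.
Proof.
move=> rankAB le_s; have := mxrank_sum_cap A B; have := mxrank_adds_leqif A B.
rewrite rankAB => -[le_AB _] sum_cap; split; first lia.
by apply/eqP; rewrite -mxrank_eq0; apply/eqP; lia.
Qed.

(* For [v] fixed by [M *m P], the vector [v *m (M - 1)] also equals [v *m M - v *m M *m P],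
   so it lies in the intersection of Im(M - 1) with the moved spaces of [P], which is 0. *)
Lemma fixmx_mxprod_direct Ms :
  \rank (movedsp Ms) = (\sum_(M <- Ms) \rank (M - 1%:M)%R)%N ->
  (fixmx (mxprod Ms) <= fixsp Ms)%MS.
Proof.
elim: Ms => [|M Ms IH]; first by move=> _; rewrite big_nil; apply: (@submx1 _ n n).
rewrite /= !big_cons => /mxrank_adds_direct/(_ (mxrank_moved_le Ms)).
case=> /IH fixP_sub cap0; set v := fixmx _.
have vMP : v *m M *m mxprod Ms = v by apply/eqP; rewrite -mulmxA -sub_fixmx.
have vM : v *m M = v.
  apply/eqP; rewrite -subr_eq0 -{2}[v]mulmx1 -mulmxBr -submx0 -cap0.
  rewrite sub_capmx submxMl /= -(eqmx_opp (_ *m _)) mulmxBr mulmx1 opprB.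
  by rewrite -{1}vMP mxprod_sub_moved.
rewrite sub_capmx sub_fixmx vM eqxx /=.
by apply: submx_trans fixP_sub; rewrite sub_fixmx -{2}vMP vM.
Qed.

(* [U ^t*] is the inverse of [U], so a vector fixed by [U ^t*] is fixed by [U]. *)
Lemma unitary_kermx_sub_fixmx m U (B : 'M_(m, n)) :
  unitary U -> (U - 1%:M <= B)%MS -> (kermx (B ^t*) <= fixmx U)%MS.
Proof.
move=> U_unitary /submxP[D DB]; set Z := kermx _.
have {}U_unitary : U \is unitarymx by rewrite qualifE -map_trmx.
have ZU : Z *m U ^t* = Z.
  apply/eqP; rewrite -subr_eq0 -{2}[Z]mulmx1 -mulmxBr.
  have -> : U ^t* - 1%:M = (U - 1%:M) ^t*.
    by rewrite linearB /= trmx1 map_mxB map_mx1.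
  by rewrite DB trmx_mul map_mxM mulmxA mulmx_ker mul0mx.
by rewrite sub_fixmx -{1}ZU mulmxKtV.
Qed.

Lemma codim_fixsp_le Ms :
  all (@unitary n) Ms -> (n - \rank (fixsp Ms) <= \rank (movedsp Ms))%N.
Proof.
move=> /allP Ms_unitary.
have ker_sub : (kermx ((movedsp Ms) ^t*) <= fixsp Ms)%MS.
  apply/sub_bigcapmx_seqP => M M_in.
  apply: unitary_kermx_sub_fixmx; first exact: Ms_unitary.
  by rewrite (big_rem M) //= addsmxSl.
have := mxrankS ker_sub; by rewrite mxrank_ker mxrank_map mxrank_tr leq_subCl.
Qed.

End FixedAndMovedSpaces.

Section StabilizersAndFixedSpaces.
Variables (gT : finGroupType) (G : {group gT}) (n : nat).
Variable rG : mx_representation algC G n.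
Implicit Types (H S : {set gT}) (X Y : 'M[algC]_n).

Lemma repr_mx_prod ts :
  {subset ts <= G} -> rG (\prod_(t <- ts) t)%g = mxprod (map rG ts).
Proof.
elim: ts => [|t ts IH] tsG; first by rewrite big_nil repr_mx1.
have /IH {}IH : {subset ts <= G} by move=> u u_in; rewrite tsG // inE u_in orbT.
have prodG : (\prod_(u <- ts) u)%g \in G.
  by rewrite big_seq group_prod // => u u_in; rewrite tsG // inE u_in orbT.
by rewrite big_cons repr_mxM ?(tsG t) ?mem_head // IH.
Qed.

Lemma stab_group_set Y : group_set (stab rG Y).
Proof.
apply/group_setP; split; first by rewrite inE group1 repr_mx1 sub_fixmx mulmx1 /=.
move=> x y; rewrite !inE !sub_fixmx => /andP[xG /eqP Yx] /andP[yG /eqP Yy].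
by rewrite groupM // repr_mxM // mulmxA Yx Yy eqxx.
Qed.

Canonical stab_group Y := group (stab_group_set Y).

Lemma stab_sub Y : stab rG Y \subset G.
Proof. by apply/subsetP => w; rewrite inE => /andP[]. Qed.

Lemma sub_fixG H Y : H \subset G -> (Y <= fixG rG H)%MS = (H \subset stab rG Y).
Proof.
move=> sHG; apply/sub_bigcapmxP/subsetP => [Y_fix w wH | sHstab w wH].
  by rewrite inE (subsetP sHG) ?Y_fix.
by have := sHstab w wH; rewrite inE => /andP[].
Qed.

Lemma fixG_gen S : S \subset G -> (fixG rG <<S>>%g == fixG rG S)%MS.
Proof.
move=> sSG; have sgenG : <<S>>%g \subset G by rewrite gen_subG.
apply/andP; split.
  by rewrite sub_fixG // (subset_trans (subset_gen S)) // -sub_fixG.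
by rewrite sub_fixG // gen_subG -sub_fixG.
Qed.

Lemma fixG_seq ts : (fixG rG [set:: ts] == fixsp (map rG ts))%MS.
Proof.
rewrite big_map; apply/andP; split.
  by apply/sub_bigcapmx_seqP => t t_in; apply: bigcapmx_inf (submx_refl _); rewrite inE.
apply/sub_bigcapmxP => t; rewrite inE => t_in.
by move/sub_bigcapmx_seqP: (submx_refl (\bigcap_(u <- ts) fixmx (rG u))%MS); apply.
Qed.

Lemma fixG_stab_flat X : flat rG X -> (fixG rG (stab rG X) == X)%MS.
Proof.
case=> T [sTrefl /andP[X_sub sub_X]]; apply/andP; split; last first.
  by rewrite sub_fixG ?stab_sub.
apply: (submx_trans _ sub_X); apply/sub_bigcapmxP => t tT.
have /setIdP[tG _] := subsetP sTrefl t tT.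
apply: bigcapmx_inf (submx_refl _); rewrite inE tG /=.
exact: submx_trans X_sub (bigcapmx_inf t tT (submx_refl _)).
Qed.

Lemma parabolic_stab Y : parabolic rG (stab rG Y).
Proof.
exists (fun v => (v <= Y)%MS) => w; rewrite inE; split.
  by case/andP=> -> Y_fix; split=> // v vY; apply/eqP; rewrite -sub_fixmx (submx_trans vY).
case=> -> Y_fix /=; apply/row_subP => i; rewrite sub_fixmx.
by rewrite Y_fix // row_sub.
Qed.

Lemma parabolic_closure_stab g X :
  g \in G -> (X == fixmx (rG g))%MS -> parabolic_closure rG g (stab rG X).
Proof.
move=> gG /andP[X_fix fix_X] w; split=> [w_stab P [A P_def] gP | closure_w].
  move: w_stab; rewrite inE => /andP[wG X_fixw].
  apply/P_def; split=> // v Av; apply/eqP; rewrite -sub_fixmx.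
  apply: (submx_trans _ X_fixw); apply: (submx_trans _ fix_X).
  by rewrite sub_fixmx; apply/eqP; apply: (proj2 (proj1 (P_def g) gP)).
by apply: closure_w (parabolic_stab X) _; rewrite inE gG.
Qed.

End StabilizersAndFixedSpaces.

Theorem mainTheorem4 (gT : finGroupType) (G : {group gT}) (n : nat)
    (rG : mx_representation algC G n) (g : gT) (ts : seq gT)
    (X : 'M[algC]_n) :
  refl_group rG -> g \in G ->
  reduced_factorization rG g ts ->
  flat rG X ->
  <<[set:: ts]>>%g = stab rG X ->
  size ts = grank rG (stab rG X) ->
  (X == fixmx (rG g))%MS /\
  parabolic_closure rG g (stab rG X) /\
  is_refl_length rG g (n - \rank (fixmx (rG g)))%N.
Proof.
move=> _ gG [fac_g len_g] flatX gen_ts size_ts.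
have /andP[/allP ts_refl /eqP g_prod] := fac_g.
have tsG : {subset ts <= G} by move=> t /ts_refl /setIdP[].
have Ms_refl M : M \in map rG ts -> is_reflection M.
  by case/mapP=> t /ts_refl /setIdP[_ ?] ->.
have fixX : (fixsp (map rG ts) :=: X)%MS.
  have sTG : [set:: ts] \subset G by apply/subsetP => t; rewrite inE; apply: tsG.
  apply: eqmx_trans (eqmx_sym (eqmxP (fixG_seq rG ts))) _.
  apply: eqmx_trans (eqmx_sym (eqmxP (fixG_gen rG sTG))) _.
  by rewrite gen_ts; apply/eqmxP/fixG_stab_flat.
have le_ts_n : (size ts <= n)%N by rewrite size_ts leq_subr.
have rankX : \rank X = (n - size ts)%N.
  by rewrite size_ts /grank (eqmxP (fixG_stab_flat flatX)) subKn ?rank_leq_col.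
have sum_ranks : (\sum_(M <- map rG ts) \rank (M - 1%:M)%R)%N = size ts.
  rewrite -(size_map rG) -sum1_size big_seq [RHS]big_seq.
  by apply: eq_bigr => M /Ms_refl/reflection_rank_moved.
have direct : \rank (movedsp (map rG ts)) = (\sum_(M <- map rG ts) \rank (M - 1%:M)%R)%N.
  have Ms_unitary : all (@unitary n) (map rG ts).
    by apply/allP => M /Ms_refl /andP[].
  have := codim_fixsp_le Ms_unitary; have := mxrank_moved_le (map rG ts).
  rewrite fixX rankX sum_ranks subKn // => le_ts ge_ts.
  by apply/eqP; rewrite eqn_leq le_ts ge_ts.
have fix_g : (fixmx (rG g) <= X)%MS.
  rewrite g_prod repr_mx_prod // -fixX; exact: fixmx_mxprod_direct.
have g_stab : g \in stab rG X.
  by rewrite -gen_ts g_prod big_seq; apply: group_prod => t t_in; apply: mem_gen; rewrite inE.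
have X_fix : (X == fixmx (rG g))%MS.
  by move: g_stab; rewrite inE => /andP[_ X_sub]; rewrite X_sub fix_g.
split=> //; split; first exact: parabolic_closure_stab.
by rewrite -(eqmxP X_fix) rankX subKn.
Qed.
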